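(* Let $M$ be a smooth orientable manifold with a fixed volume form $V$ and a Poisson bracket $\{\cdot,\cdot\}$, and let $X_V$ be the modular vector field. Let $f,m\in C^\infty(M)$. Then $m$ is a last multiplier of the Hamiltonian vector field $A_f$ if and only if $f$ is a first integral of the vector field $mX_V-A_m$, i.e. $(mX_V-A_m)(f)=0$. Moreover, if $(M,\{\cdot,\cdot\},V)$ is unimodular with $X_V=A_\rho$, $\rho\in C^\infty(M)$, then $m$ is a last multiplier of $A_f$ if and only if $m\{\rho,f\}=\{m,f\}$.
   Context: For $h\in C^\infty(M)$, the Hamiltonian vector field $A_h$ is defined by $A_h(g)=\{h,g\}$ for all $g\in C^\infty(M)$. For a vector field $A$, $\operatorname{div}_V A$ is defined by $L_AV=(\operatorname{div}_VA)V$. The modular vector field $X_V$ is the unique vector field with $\operatorname{div}_V A_h=X_V(h)$ for all $h\in C^\infty(M)$. The triple $(M,\{\cdot,\cdot\},V)$ is unimodular if $X_V$ is a Hamiltonian vector field $A_\rho$ for some $\rho\in C^\infty(M)$. A function $m$ is a last multiplier of a vector field $A$ if $d(m\,i_AV)=0$, equivalently $A(m)+m\operatorname{div}_VA=0$. A first integral of a vector field $Y$ is a function $f$ with $Y(f)=0$. *)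

(* Abstract (algebraic) model of the data of Proposition 2.1:
   F plays the role of C^oo(M) (a commutative R-algebra), vector fields are
   R-derivations of F, Om plays the role of the F-module of top-degree forms,
   V is a volume form (a free generator of Om), Lie A is the Lie derivative
   along A acting on top-degree forms. *)
From HB Require Import structures.
From mathcomp Require Import all_boot all_algebra.
From mathcomp Require Import reals.
From Stdlib Require Import ClassicalEpsilon.
Set Implicit Arguments. Unset Strict Implicit. Unset Printing Implicit Defensive.
Import GRing.Theory.
Local Open Scope ring_scope.

Definition is_vector_field (R : realType) (F : comAlgType R) (A : F -> F) : Prop :=
  (forall (a : R) (f g : F), A (a *: f + g) = a *: A f + A g) /\
  (forall f g : F, A (f * g) = f * A g + A f * g).

Definition is_poisson_bracket (R : realType) (F : comAlgType R)
    (br : F -> F -> F) : Prop :=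
  (forall (a : R) (h f g : F), br h (a *: f + g) = a *: br h f + br h g) /\
  (forall f g : F, br f g = - br g f) /\
  (forall h f g : F, br h (f * g) = f * br h g + br h f * g) /\
  (forall f g h : F, br f (br g h) + br g (br h f) + br h (br f g) = 0).

Definition ham (R : realType) (F : comAlgType R) (br : F -> F -> F) (h : F)
  : F -> F := fun g => br h g.

Definition is_volume_form (R : realType) (F : comAlgType R) (Om : lmodType F)
    (V : Om) : Prop :=
  forall w : Om, exists! g : F, w = g *: V.

Definition is_top_lie (R : realType) (F : comAlgType R) (Om : lmodType F)
    (Lie : (F -> F) -> Om -> Om) : Prop :=
  forall A : F -> F, is_vector_field A ->
    (forall w1 w2 : Om, Lie A (w1 + w2) = Lie A w1 + Lie A w2) /\
    (forall (g : F) (w : Om), Lie A (g *: w) = A g *: w + g *: Lie A w) /\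
    (forall (g : F) (w : Om), Lie (fun h => g * A h) w = g *: Lie A w + A g *: w).

Definition divV (R : realType) (F : comAlgType R) (Om : lmodType F)
    (Lie : (F -> F) -> Om -> Om) (V : Om) (A : F -> F) : F :=
  epsilon (inhabits 0) (fun g : F => Lie A V = g *: V).

Definition is_modular_vf (R : realType) (F : comAlgType R) (Om : lmodType F)
    (br : F -> F -> F) (Lie : (F -> F) -> Om -> Om) (V : Om) (X : F -> F) : Prop :=
  is_vector_field X /\ forall h : F, divV Lie V (ham br h) = X h.

Definition last_multiplier (R : realType) (F : comAlgType R) (Om : lmodType F)
    (Lie : (F -> F) -> Om -> Om) (V : Om) (A : F -> F) (m : F) : Prop :=
  A m + m * divV Lie V A = 0.

Definition first_integral (R : realType) (F : comAlgType R) (Y : F -> F) (f : F)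
  : Prop := Y f = 0.

From HB Require Import structures.
From mathcomp Require Import all_boot all_algebra.
From mathcomp Require Import reals.
Import GRing.Theory.
Local Open Scope ring_scope.

(* By definition of the modular vector field, div_V A_f = X_V(f), and by
   skew-symmetry A_f(m) = {f, m} = - A_m(f).  So the last multiplier equation
   A_f(m) + m div_V A_f = 0 is literally (m X_V - A_m)(f) = 0; when X_V = A_rho
   it reads m {rho, f} - {m, f} = 0. *)

Section HamiltonianLastMultiplier.

Variables (R : realType) (F : comAlgType R) (Om : lmodType F).
Variables (br : F -> F -> F) (Lie : (F -> F) -> Om -> Om) (V : Om) (X : F -> F).

Hypothesis br_skew : forall f g : F, br f g = - br g f.
Hypothesis divV_ham : forall h : F, divV Lie V (ham br h) = X h.

Lemma last_multiplier_hamE (f m : F) :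
  last_multiplier Lie V (ham br f) m <->
  first_integral (fun g => m * X g - ham br m g) f.
Proof.
by rewrite /last_multiplier /first_integral divV_ham /ham br_skew addrC.
Qed.

Lemma last_multiplier_ham_unimodular (rho f m : F) :
  (forall h : F, X h = ham br rho h) ->
  last_multiplier Lie V (ham br f) m <-> m * br rho f = br m f.
Proof.
move=> X_ham; rewrite last_multiplier_hamE /first_integral X_ham /ham.
by split=> [/eqP|->]; [rewrite subr_eq0 => /eqP | rewrite subrr].
Qed.

End HamiltonianLastMultiplier.

Theorem proposition2p1 (R : realType) (F : comAlgType R) (Om : lmodType F)
    (br : F -> F -> F) (V : Om) (Lie : (F -> F) -> Om -> Om) (X : F -> F)
    (f m : F) :
  is_poisson_bracket br -> is_volume_form V -> is_top_lie Lie ->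
  is_modular_vf br Lie V X ->
  (last_multiplier Lie V (ham br f) m <->
     first_integral (fun g => m * X g - ham br m g) f) /\
  (forall rho : F, (forall h : F, X h = ham br rho h) ->
     (last_multiplier Lie V (ham br f) m <-> m * br rho f = br m f)).
Proof.
move=> [_ [br_skew _]] _ _ [_ divV_ham].
split; first exact: last_multiplier_hamE.
move=> rho; exact: last_multiplier_ham_unimodular.
Qed.
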